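(* Let $m,k,d$ be positive integers with $d\ge k$, and let $a_1,\dots,a_k$ be positive integers with $a_1+\dots+a_k\le m$. Let $S$ be a uniformly random subset of $[m]$ of size $d$. Among all families $\{A_1,\dots,A_k\}$ of subsets of $[m]$ with $|A_i|=a_i$ for each $i$, the probability $$\mathbb P\big(\{S\cap A_1,\dots,S\cap A_k\}\text{ has a system of distinct representatives}\big)$$ is maximised when the sets $A_1,\dots,A_k$ are mutually disjoint.
   Context: A system of distinct representatives for sets $B_1,\dots,B_k$ is a choice of elements $b_i\in B_i$ with $b_1,\dots,b_k$ pairwise distinct. *)

From HB Require Import structures.
From mathcomp Require Import all_boot all_order all_algebra.
Set Implicit Arguments. Unset Strict Implicit. Unset Printing Implicit Defensive.
Import Order.TTheory GRing.Theory Num.Theory.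

Definition has_sdr (T : finType) (k : nat) (B : 'I_k -> {set T}) : bool :=
  [exists f : {ffun 'I_k -> T}, injectiveb f && [forall i, f i \in B i]].

Definition sdr_prob (m k d : nat) (A : 'I_k -> {set 'I_m}) : rat :=
  (#|[set S : {set 'I_m} | (#|S| == d) && has_sdr (fun i => S :&: A i)]|%:R
     / 'C(m, d)%:R)%R.

From HB Require Import structures.
From mathcomp Require Import all_boot all_order all_algebra all_fingroup zify.
Import Order.TTheory GRing.Theory Num.Theory.
Set Implicit Arguments. Unset Strict Implicit. Unset Printing Implicit Defensive.

(* Since S is uniform, it suffices to compare the numbers of
   "good" d-sets S, i.e. those for which {S :&: A_i} has an SDR.  Two
   operations never decrease this number:
   - shifting: replace x \in A_j by a point y lying in no A_q.  A d-set S that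
     is good for A but not for the shifted family contains x, avoids y, and
     every SDR of S uses x at j; then y |: (S :\ x) is good for the shifted
     family but not for A, and this map is injective;
   - relabelling the ground set by a permutation.
   A family with total size at most |T| that is not pairwise disjoint has a
   point in two sets and a point outside all of them, so shifting strictly
   enlarges its union; iterating gives a disjoint family with the same sizes.
   Two disjoint families with the same sizes are related by transpositions,
   each increasing their agreement \sum_q |A_q :&: B_q|. *)

Section GoodSets.
Variables (T : finType) (k d : nat).
Implicit Types (A : 'I_k -> {set T}) (S U : {set T}).

Lemma has_sdrP (C : 'I_k -> {set T}) :
  reflect (exists f : 'I_k -> T, injective f /\ forall i, f i \in C i)
          (has_sdr C).
Proof.
apply: (iffP existsP) => [[f /andP [/injectiveP inj /forallP Hf]]|[f [inj Hf]]].
  by exists f.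
exists (finfun f); apply/andP; split.
  by apply/injectiveP => i j; rewrite !ffunE; apply: inj.
by apply/forallP => i; rewrite ffunE.
Qed.

Definition good_sets A : {set {set T}} :=
  [set S : {set T} | (#|S| == d) && has_sdr (fun i => S :&: A i)].

Definition shift A (j : 'I_k) (x y : T) : 'I_k -> {set T} :=
  fun q => if q == j then y |: (A j :\ x) else A q.

Lemma card_move S x y : x \in S -> y \notin S -> #|y |: (S :\ x)| = #|S|.
Proof.
by move=> xS yS; rewrite cardsU1 (cardsD1 x S) xS !inE negb_and yS orbT.
Qed.

Lemma card_shift A j x y q :
  x \in A j -> (forall q, y \notin A q) -> #|shift A j x y q| = #|A q|.
Proof.
by move=> xA yA; rewrite /shift; case: eqP => [->|//]; rewrite card_move.
Qed.

Lemma sdr_shift_keep A j x y S (f : 'I_k -> T) :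
  injective f -> (forall q, f q \in S :&: A q) -> f j != x ->
  has_sdr (fun q => S :&: shift A j x y q).
Proof.
move=> inj Hf fjx; apply/has_sdrP; exists f; split=> // q; rewrite /shift.
case: eqP => [->|_ //]; have := Hf j.
by rewrite !inE fjx => /andP [-> ->]; rewrite orbT.
Qed.

Lemma sdr_shift_fresh A j x y U (f : 'I_k -> T) :
  injective f -> (forall q, f q \in A q) -> (forall q, y \notin A q) ->
  y \in U -> (forall q, q != j -> f q \in U) ->
  has_sdr (fun q => U :&: shift A j x y q).
Proof.
move=> inj fA yA yU fU.
have fy q : f q != y by apply: contraNneq (yA q) => <-.
apply/has_sdrP; exists (fun q => if q == j then y else f q); split.
  move=> a b /=; case: eqP => [->|_]; case: eqP => [->|_] //.
  - by move=> /esym /eqP; rewrite (negbTE (fy b)).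
  - by move=> /eqP; rewrite (negbTE (fy a)).
  - exact: inj.
move=> q /=; rewrite /shift; case: eqP => [_|/eqP nq].
  by rewrite !inE eqxx yU.
by rewrite inE fU ?fA.
Qed.

Lemma lost_good_set A j x y S :
  (forall q, y \notin A q) ->
  S \in good_sets A :\: good_sets (shift A j x y) ->
  [/\ x \in S, y \notin S, #|S| = d,
      exists f : 'I_k -> T, injective f /\ forall q, f q \in S :&: A q
    & forall f : 'I_k -> T,
        injective f -> (forall q, f q \in S :&: A q) -> f j = x].
Proof.
move=> yA; rewrite !inE => /andP [lost /andP [/eqP cardS /has_sdrP [f [inj Hf]]]].
have uses_x g : injective g -> (forall q, g q \in S :&: A q) -> g j = x.
  move=> ginj Hg; apply/eqP; apply: contraNT lost => gjx.
  by rewrite cardS eqxx (sdr_shift_keep y ginj Hg gjx).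
have fA q : f q \in A q by have /setIP [] := Hf q.
split=> //; last by exists f.
- by have /setIP [] := Hf j; rewrite (uses_x f inj Hf).
- apply: contra lost => yS; rewrite cardS eqxx /=.
  by apply: (sdr_shift_fresh x inj fA) => // q _; have /setIP [] := Hf q.
Qed.

(* Shifting a point to a fresh point does not decrease the number of good
   sets: S |-> y |: (S :\ x) injects the lost good sets into the new ones. *)
Lemma shift_good_le A j x y :
  (forall q, y \notin A q) -> #|good_sets A| <= #|good_sets (shift A j x y)|.
Proof.
move=> yA; set GA := good_sets A; set GB := good_sets _.
pose h S := y |: (S :\ x).
have h_inj : {in GA :\: GB &, injective h}.
  move=> S1 S2 /(lost_good_set yA) [x1 y1 _ _ _] /(lost_good_set yA) [x2 y2 _ _ _].
  move/setP => E; apply/setP => z; have := E z; rewrite !inE.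
  case: (eqVneq z x) => [->|zx]; first by rewrite x1 x2.
  by case: (eqVneq z y) => [->|//]; rewrite (negbTE y1) (negbTE y2).
have h_gained : h @: (GA :\: GB) \subset GB :\: GA.
  apply/subsetP => _ /imsetP [S /(lost_good_set yA) [xS yS cardS [f [inj Hf]] uses_x] ->].
  have fA q : f q \in A q by have /setIP [] := Hf q.
  rewrite !inE /h card_move // cardS eqxx /=; apply/andP; split.
    apply/negP => /has_sdrP [g [ginj Hg]].
    have gS q : g q \in S :&: A q.
      have /setIP [gh gA] := Hg q.
      have gy : g q != y by apply: contraNneq (yA q) => <-.
      by move: gh; rewrite !inE (negbTE gy) gA => /andP [_ ->].
    have /setIP [] := Hg j; rewrite (uses_x g ginj gS) !inE eqxx /= orbF.
    by move=> /eqP xy; move: yS; rewrite -xy xS.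
  apply: (sdr_shift_fresh x inj fA yA); first by rewrite !inE eqxx.
  move=> q nq; rewrite !inE; have /setIP [-> _] := Hf q.
  by rewrite andbT -(uses_x f inj Hf) (inj_eq inj) nq orbT.
rewrite -(cardsID GB GA) -(cardsID GA GB) setIC leq_add2l.
by rewrite -(card_in_imset h_inj) subset_leq_card.
Qed.

Lemma relabel_good_le A (p : {perm T}) :
  #|good_sets A| <= #|good_sets (fun q => p @: A q)|.
Proof.
rewrite -(card_imset (good_sets A) (imset_inj (@perm_inj _ p))).
apply/subset_leq_card/subsetP => pS /imsetP [S].
rewrite !inE => /andP [cardS /has_sdrP [f [inj Hf]]] ->.
rewrite card_imset ?cardS /=; last exact: perm_inj.
apply/has_sdrP; exists (fun q => p (f q)); split; first by move=> a b /perm_inj /inj.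
by move=> q; have /setIP [fS fA] := Hf q; rewrite !inE !imset_f.
Qed.

End GoodSets.

Section DisjointFamilies.
Variables (T : finType) (k : nat).
Implicit Types (A B : 'I_k -> {set T}).

Definition disjoint_family A : bool :=
  [forall i, forall j, (i != j) ==> [disjoint A i & A j]].

Lemma disjoint_familyP A :
  reflect (forall i j, i != j -> [disjoint A i & A j]) (disjoint_family A).
Proof.
apply: (iffP forallP) => [H i j|H i]; first by move/forallP: (H i) => /(_ j) /implyP.
by apply/forallP => j; apply/implyP; apply: H.
Qed.

Lemma disjoint_family_eq A i j z :
  disjoint_family A -> z \in A i -> z \in A j -> i = j.
Proof.
move=> /disjoint_familyP dA zi zj; apply/eqP/negPn/negP => ij.
by rewrite (disjointFr (dA i j ij) zi) in zj.
Qed.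

Lemma card_bigcup_le (P : pred 'I_k) (F : 'I_k -> {set T}) :
  #|\bigcup_(i | P i) F i| <= \sum_(i | P i) #|F i|.
Proof.
elim/big_rec2: _ => [|i n s _ IH]; first by rewrite cards0.
exact: leq_trans (leq_card_setU _ _).1 (leq_add (leqnn _) IH).
Qed.

Lemma card_bigcup_lt A i l z :
  i != l -> z \in A i -> z \in A l ->
  #|\bigcup_(q < k) A q| < \sum_(q < k) #|A q|.
Proof.
move=> il zi zl; rewrite (bigD1 i) //= [X in _ < X](bigD1 i) //= cardsU.
set U := \bigcup_(q | q != i) A q; set s := \sum_(q < k | q != i) #|A q|.
have common : 0 < #|A i :&: U|.
  apply/card_gt0P; exists z; rewrite inE zi /=.
  by apply/bigcupP; exists l; rewrite // eq_sym.
have : #|A i :&: U| <= #|A i| by apply/subset_leq_card/subsetIl.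
have : #|U| <= s by exact: card_bigcup_le.
lia.
Qed.

Lemma shift_union_grows A i l z y :
  i != l -> z \in A i -> z \in A l -> (forall q, y \notin A q) ->
  #|\bigcup_(q < k) A q| < #|\bigcup_(q < k) shift A l z y q|.
Proof.
move=> il zi zl yA; apply/proper_card/properP; split.
  apply/subsetP => w /bigcupP [q _ wq]; apply/bigcupP.
  case: (eqVneq q l) => [ql|ql]; last by exists q; rewrite // /shift (negbTE ql).
  case: (eqVneq w z) => [->|wz]; first by exists i; rewrite // /shift (negbTE il).
  by exists l; rewrite // /shift eqxx !inE wz -ql wq orbT.
exists y; last by apply/bigcupP => -[q _]; apply/negP.
by apply/bigcupP; exists l; rewrite // /shift eqxx !inE eqxx.
Qed.

Lemma nondisjoint_shift d A :
  ~~ disjoint_family A -> \sum_(q < k) #|A q| <= #|T| ->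
  exists A' : 'I_k -> {set T},
    [/\ forall q, #|A' q| = #|A q|,
        #|\bigcup_(q < k) A q| < #|\bigcup_(q < k) A' q|
      & #|good_sets d A| <= #|good_sets d A'|].
Proof.
move=> /forallPn [i] /forallPn [l]; rewrite negb_imply => /andP [il].
case/pred0Pn => z /andP [zi zl] sizeA.
have [y _ yA] : exists2 y, y \in [set: T] & y \notin \bigcup_(q < k) A q.
  apply/subsetPn/negP => /subset_leq_card; rewrite cardsT leqNgt.
  by rewrite (leq_trans (card_bigcup_lt il zi zl) sizeA).
have yA' q : y \notin A q by apply: contra yA => yq; apply/bigcupP; exists q.
exists (shift A l z y); split.
- by move=> q; apply: card_shift.
- exact: shift_union_grows il zi zl yA'.
- exact: shift_good_le yA'.
Qed.

(* Repeated shifting turns any family of total size at most |T| into a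
   disjoint family with the same sizes and at least as many good sets; the
   descent measure is the number of points outside the union. *)
Lemma make_disjoint d A :
  \sum_(q < k) #|A q| <= #|T| ->
  exists2 A' : 'I_k -> {set T}, disjoint_family A' &
    (forall q, #|A' q| = #|A q|) /\ #|good_sets d A| <= #|good_sets d A'|.
Proof.
have [n] := ubnP (#|T| - #|\bigcup_(q < k) A q|).
elim: n A => // n IH A measure sizeA.
have [dA|ndA] := boolP (disjoint_family A); first by exists A.
have [A' [cardA' grows le]] := nondisjoint_shift d ndA sizeA.
have sizeA' : \sum_(q < k) #|A' q| <= #|T| by under eq_bigr do rewrite cardA'.
have [|A'' dA'' [cardA'' le']] := IH A' _ sizeA'.
  by have := subset_leq_card (subsetT (\bigcup_(q < k) A' q)); rewrite cardsT; lia.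
exists A'' => //; split; last exact: leq_trans le le'.
by move=> q; rewrite cardA'' cardA'.
Qed.

Lemma disjoint_family_relabel A (p : {perm T}) :
  disjoint_family A -> disjoint_family (fun q => p @: A q).
Proof.
move=> dA; apply/disjoint_familyP => i j ij; apply/pred0P => z /=.
apply/negbTE/negP => /andP [/imsetP [w wi ->] /imsetP [w' wj /perm_inj ww']].
by move: ij; rewrite (disjoint_family_eq dA wi (_ : w \in A j)) ?eqxx // ww'.
Qed.

Lemma transposition_step A B j :
  disjoint_family A -> disjoint_family B -> (forall q, #|A q| = #|B q|) ->
  A j != B j ->
  exists p : {perm T},
    \sum_(q < k) #|A q :&: B q| < \sum_(q < k) #|p @: A q :&: B q|.
Proof.
move=> dA dB cardAB AB.
have [x xA xB] : exists2 x, x \in A j & x \notin B j.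
  by apply/subsetPn; apply: contra AB => sAB; rewrite eqEcard sAB cardAB /=.
have [y yB yA] : exists2 y, y \in B j & y \notin A j.
  by apply/subsetPn; apply: contra AB => sBA; rewrite eq_sym eqEcard sBA cardAB /=.
exists (tperm x y).
have agree q : A q :&: B q \subset tperm x y @: A q :&: B q.
  apply/subsetP => w /setIP [wA wB]; rewrite inE wB andbT.
  have xw : x != w.
    by apply: contraNneq xB => xw; rewrite (disjoint_family_eq dA xA (_ : x \in A q)) ?xw.
  have yw : y != w.
    by apply: contraNneq yA => yw; rewrite (disjoint_family_eq dB yB (_ : y \in B q)) ?yw.
  by rewrite -(tpermD xw yw) imset_f.
have gain : #|A j :&: B j| < #|tperm x y @: A j :&: B j|.
  apply/proper_card/properP; split; first exact: agree.
  by exists y; rewrite !inE ?yB ?(negbTE yA) // -{1}(tpermL x y) imset_f.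
rewrite (bigD1 j) //= [X in _ < X](bigD1 j) //= -addSn.
by apply: leq_add gain _; apply: leq_sum => q _; apply/subset_leq_card/agree.
Qed.

(* Among disjoint families with prescribed sizes the number of good sets is
   constant; we need one inequality, obtained by transposing towards B until
   the agreement with B is total. *)
Lemma disjoint_good_le d A B :
  disjoint_family A -> disjoint_family B -> (forall q, #|A q| = #|B q|) ->
  #|good_sets d A| <= #|good_sets d B|.
Proof.
move=> + dB cardAB.
have [n] := ubnP (\sum_(q < k) #|B q| - \sum_(q < k) #|A q :&: B q|).
elim: n A cardAB => // n IH A cardAB measure dA.
have [eqAB|/forallPn [j AB]] := boolP [forall q, A q == B q].
  apply/eq_leq/eq_card => S; rewrite !inE /has_sdr; congr (_ && _).
  apply: eq_existsb => f; congr (_ && _); apply: eq_forallb => i.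
  by rewrite (eqP (forallP eqAB i)).
have [p gain] := transposition_step dA dB cardAB AB.
apply: leq_trans (relabel_good_le d A p) (IH _ _ _ (disjoint_family_relabel p dA)).
  by move=> q; rewrite card_imset ?cardAB //; apply: perm_inj.
have : \sum_(q < k) #|p @: A q :&: B q| <= \sum_(q < k) #|B q|.
  by apply: leq_sum => q _; apply/subset_leq_card/subsetIr.
lia.
Qed.

End DisjointFamilies.

Theorem mainTheorem10 (m k d : nat) (a : 'I_k -> nat)
  (hm : 0 < m) (hk : 0 < k) (hd : 0 < d) (hdk : k <= d)
  (ha : forall i, 0 < a i) (hsum : \sum_(i < k) a i <= m)
  (A B : 'I_k -> {set 'I_m})
  (hA : forall i, #|A i| = a i) (hB : forall i, #|B i| = a i)
  (hBdisj : forall i j, i != j -> [disjoint B i & B j]) :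
  (sdr_prob d A <= sdr_prob d B)%R.
Proof.
have dB : disjoint_family B by apply/disjoint_familyP.
have sizeA : \sum_(q < k) #|A q| <= #|'I_m|.
  by rewrite card_ord; under eq_bigr do rewrite hA.
have [A' dA' [cardA' le]] := make_disjoint d sizeA.
have le' : #|good_sets d A'| <= #|good_sets d B|.
  by apply: disjoint_good_le => // q; rewrite cardA' hA hB.
rewrite /sdr_prob ler_wpM2r ?invr_ge0 ?ler0n // ler_nat.
exact: leq_trans le le'.
Qed.
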